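(* Let $(D,s,t,k)$ be a reduced instance of Rooted $k$-Distinct Branchings, let $(\hat T,\{B_x\})$ be the $s$-rooted cut decomposition of $D$, and let $\hat P=x_1\dots x_\ell$ be a degenerate path of $\hat T$. If $x_iu$ and $x_ju$ are two arcs of $A^+\cap R_t$ with $i<j$ (same head $u$), then $(D,s,t,k)$ is a positive instance if and only if $(D-x_ju,s,t,k)$ is a positive instance.
   Context: Digraphs are finite and without loops; paths are directed. An out-tree (in-tree) is an oriented tree with exactly one vertex of in-degree zero (out-degree zero), its root; an out-branching (in-branching) of $D$ is a spanning out-tree (in-tree). An instance $(D,s,t,k)$ of Rooted $k$-Distinct Branchings ($D$ a digraph, $s,t\in V(D)$, $k$ an integer) is positive if $D$ has an out-branching $T^+$ rooted at $s$ and an in-branching $T^-$ rooted at $t$ with $|A(T^+)\setminus A(T^-)|\ge k$. It is reduced if $D$ has an out-branching rooted at $s$, an in-branching rooted at $t$, and every arc of $D$ lies in some out-branching rooted at $s$ or in some in-branching rooted at $t$. $R_s$ is the set of arcs lying in no out-branching rooted at $s$, and $R_t$ the set of arcs lying in no in-branching rooted at $t$. A vertex $v$ is bi-reachable from $r$ if there are two internally vertex-disjoint directed paths from $r$ to $v$. For a digraph $H$ with at least two vertices and $r\in V(H)$ such that every vertex of $H$ is reachable from $r$, the diblock $B_r$ of $r$ in $H$ is the set of all vertices bi-reachable from $r$, together with $r$ and all out-neighbours of $r$. For $x\in B_r\setminus\{r\}$ let $X_x$ be the set of vertices $v\notin B_r$ such that every directed $r$–$v$ path intersects $B_r$ for the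 last time in $x$; $x$ is a bottleneck of $B_r$ if $X_x\ne\emptyset$. The $r$-rooted cut decomposition $(\hat T,\{B_x\}_{x\in V(\hat T)})$ of $H$ is defined recursively: $\hat T$ is a rooted tree with root $r$; the set associated with the root is $B_r$; the children of $r$ are the bottlenecks of $B_r$; for each bottleneck $x$, the subtree rooted at $x$ with its sets is the $x$-rooted cut decomposition of $H[X_x\cup\{x\}]$. $B_x$ is degenerate if $x$ is an internal node of $\hat T$ and $|B_x|=2$. A path $x_1\dots x_\ell$ in $\hat T$ is degenerate if it is a subpath of a root-to-leaf path of $\hat T$ (with $x_{i+1}$ a child of $x_i$) and every $B_{x_i}$ is degenerate. For such a path $\hat P$, $A^+$ is the set of arcs $x_iu$ of $D$ with $x_i\in V(\hat P)$ and $u\notin V(\hat P)$, $u\in B_y$ for some proper ancestor $y$ of $x_1$ in $\hat T$. *)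

(* Digraph D = (V, A): V a finType (the vertex set V(D)),
   A : {set V * V} its arc set; an arc (x,y) goes from x to y. *)
From mathcomp Require Import all_boot.
Set Implicit Arguments. Unset Strict Implicit. Unset Printing Implicit Defensive.

Section Digraphs.
Variable V : finType.

Definition loopless (A : {set V * V}) : Prop := forall a, a \in A -> a.1 != a.2.

Definition arcrel (T : {set V * V}) : rel V := fun x y => (x, y) \in T.

Definition out_branching (A T : {set V * V}) (s : V) : Prop :=
  [/\ T \subset A,
      #|[set a in T | a.2 == s]| = 0,
      (forall v, v != s -> #|[set a in T | a.2 == v]| = 1) &
      (forall v, connect (arcrel T) s v)].

Definition in_branching (A T : {set V * V}) (t : V) : Prop :=
  [/\ T \subset A,
      #|[set a in T | a.1 == t]| = 0,
      (forall v, v != t -> #|[set a in T | a.1 == v]| = 1) &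
      (forall v, connect (arcrel T) v t)].

Definition positive (A : {set V * V}) (s t : V) (k : nat) : Prop :=
  exists Tp Tm, [/\ out_branching A Tp s, in_branching A Tm t & k <= #|Tp :\: Tm|].

Definition reduced (A : {set V * V}) (s t : V) : Prop :=
  [/\ (exists T, out_branching A T s), (exists T, in_branching A T t) &
      (forall a, a \in A ->
         (exists T, out_branching A T s /\ a \in T) \/
         (exists T, in_branching A T t /\ a \in T))].

Definition in_Rt (A : {set V * V}) (t : V) (a : V * V) : Prop :=
  a \in A /\ ~ (exists T, in_branching A T t /\ a \in T).

Definition eW (W : {set V}) (A : {set V * V}) : rel V :=
  fun x y => [&& x \in W, y \in W & (x, y) \in A].

(* a :: p is a directed path (no repeated vertices) from a to b in D[W] *)
Definition dpath (W : {set V}) (A : {set V * V}) (a b : V) (p : seq V) : bool :=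
  [&& a \in W, path (eW W A) a p, last a p == b & uniq (a :: p)].

Definition internal (p : seq V) : seq V := take (size p).-1 p.

Definition bireach (W : {set V}) (A : {set V * V}) (r v : V) : Prop :=
  exists p q, [/\ dpath W A r v p, dpath W A r v q, p != q &
                  ~~ has (fun y => y \in internal q) (internal p)].

Definition in_diblock (W : {set V}) (A : {set V * V}) (r v : V) : Prop :=
  v \in W /\ (v = r \/ eW W A r v \/ bireach W A r v).

Definition in_X (W : {set V}) (A : {set V * V}) (r : V) (Br : {set V}) (x v : V) : Prop :=
  [/\ x \in Br, x != r, v \in W, v \notin Br &
      forall p, dpath W A r v p -> last r [seq y <- p | y \in Br] = x].

(* cutdec A par B W r N : the r-rooted cut decomposition of D[W] has node set
   N (a set of vertices), parent function par (for non-root nodes) and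
   associated sets B x (for nodes x). *)
Inductive cutdec (A : {set V * V}) (par : V -> V) (B : V -> {set V}) :
    {set V} -> V -> {set V} -> Prop :=
| CutDecNode (W : {set V}) (r : V) (N : {set V}) (X Nc : V -> {set V}) :
    r \in W ->
    (forall v, v \in B r <-> in_diblock W A r v) ->
    (forall x v, v \in X x <-> in_X W A r (B r) x v) ->
    (forall x, x \in B r -> x != r -> X x != set0 ->
        par x = r /\ cutdec A par B (x |: X x) x (Nc x)) ->
    N = r |: \bigcup_(x in B r | (x != r) && (X x != set0)) Nc x ->
    cutdec A par B W r N.

Definition child (N : {set V}) (par : V -> V) (s : V) : rel V :=
  fun x y => [&& y \in N, y != s & par y == x].

Definition internal_node (N : {set V}) (par : V -> V) (s x : V) : bool :=
  (x \in N) && [exists y, child N par s x y].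

Definition proper_anc (N : {set V}) (par : V -> V) (s x y : V) : Prop :=
  exists z, child N par s z x /\ connect (fun a b => child N par s b a) z y.

Definition degenerate_path (N : {set V}) (par : V -> V) (B : V -> {set V}) (s : V)
    (x1 : V) (rest : seq V) : Prop :=
  path (child N par s) x1 rest /\
  all (fun x => internal_node N par s x && (#|B x| == 2)) (x1 :: rest).

Definition in_Aplus (A : {set V * V}) (N : {set V}) (par : V -> V) (B : V -> {set V})
    (s x1 : V) (rest : seq V) (a : V * V) : Prop :=
  [/\ a \in A, a.1 \in x1 :: rest, a.2 \notin x1 :: rest &
      exists y, proper_anc N par s x1 y /\ a.2 \in B y].

End Digraphs.

(* Each node of the cut decomposition other than the root is a dominator
   (with respect to s) of its children: every arc entering the piece
   X_x ∪ {x} of a bottleneck x of B_r enters it at x, because any vertex of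
   D[W] outside X_x can be reached from r while avoiding x.  Along the
   degenerate path x_i therefore dominates x_j for i < j.  If an out-branching
   T+ uses x_j u, then its s–x_i path avoids u (it would otherwise run through
   x_j, the unique T+-predecessor of u, before reaching its dominator x_i), so
   exchanging x_j u for x_i u yields an out-branching of D - x_j u.  Both arcs
   lie in R_t, hence in no in-branching, and |A(T+) \ A(T-)| is unchanged. *)
From Stdlib Require Import Classical.
From mathcomp Require Import all_boot.
Set Implicit Arguments. Unset Strict Implicit. Unset Printing Implicit Defensive.

Lemma cardsU1D1 (T : finType) (S : {set T}) a b :
  a \in S -> b \notin S -> #|b |: (S :\ a)| = #|S|.
Proof.
move=> aS bS; rewrite cardsU1 !inE (negPf bS) andbF (cardsD1 a S) aS.
by rewrite addnC.
Qed.

Section Digraph.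
Variables (V : finType) (A : {set V * V}).

Lemma path_eW_subset (W : {set V}) z p : path (eW W A) z p -> {subset p <= W}.
Proof.
elim: p z => [|y p IH] z //= /andP[/and3P[_ hy _] hp] w.
by rewrite inE => /orP[/eqP->//|]; apply: IH hp w.
Qed.

Lemma eW_subrel (W W' : {set V}) : W \subset W' -> subrel (eW W A) (eW W' A).
Proof.
move=> sW x y /and3P[hx hy ha].
by rewrite /eW (subsetP sW _ hx) (subsetP sW _ hy) ha.
Qed.

Lemma path_eW_setD1 (W : {set V}) z p x :
  path (eW W A) z p -> z != x -> x \notin p -> path (eW (W :\ x) A) z p.
Proof.
elim: p z => [|y p IH] z //= /andP[/and3P[hz hy ha] hp] hzx.
rewrite inE negb_or => /andP[hxy hxp].
by rewrite /eW !inE hz hy ha hzx eq_sym hxy IH // eq_sym.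
Qed.

Lemma connect_eW_setD1 (W : {set V}) z p x :
  path (eW W A) z p -> z != x -> x \notin p ->
  connect (eW (W :\ x) A) z (last z p).
Proof.
by move=> hp hz hx; apply: (path_connect (path_eW_setD1 hp hz hx)); apply: mem_last.
Qed.

Lemma dpath_of_connect (W : {set V}) r v :
  r \in W -> connect (eW W A) r v ->
  exists p, dpath W A r v p /\ {subset p <= W}.
Proof.
move=> hr /connectP[p hp ->]; case: (shortenP hp) => p' hp' hu _.
by exists p'; split; [rewrite /dpath hr hp' eqxx hu | apply: path_eW_subset hp'].
Qed.

Lemma internal_rcons (p : seq V) y : internal (rcons p y) = p.
Proof. by rewrite /internal size_rcons /= -cats1 take_size_cat. Qed.

Lemma mem_last_neq (r x : V) (p : seq V) : last r p = x -> x != r -> x \in p.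
Proof. by move=> hl hxr; have := mem_last r p; rewrite hl inE (negPf hxr). Qed.

Definition dominates (s c y : V) : Prop :=
  forall p, path (arcrel A) s p -> last s p = y -> c \in s :: p.

Lemma dominates_trans s c1 c2 c3 :
  dominates s c1 c2 -> dominates s c2 c3 -> dominates s c1 c3.
Proof.
move=> d12 d23 p hp hl; have hc2 := d23 p hp hl.
move: hp hl; case/splitPl: hc2 => p1 p2 hl1.
rewrite cat_path => /andP[hp1 _] _.
by have := d12 p1 hp1 hl1; rewrite !inE mem_cat => /orP[->|->]; rewrite ?orbT.
Qed.

(* A simple path ending at a dominator c of y cannot have met y already:
   the prefix up to y would contain c a second time. *)
Lemma dominated_notin_path s c y p :
  dominates s c y -> c != y ->
  path (arcrel A) s p -> uniq (s :: p) -> last s p = c -> y \notin s :: p.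
Proof.
move=> d hcy hp hu hl; apply/negP => hy.
move: hp hu hl; case/splitPl: hy => p1 p2 hl1.
rewrite cat_path -cat_cons cat_uniq last_cat hl1.
move=> /andP[hp1 _] /and3P[_ hdis _] hl2.
have hc2 : c \in p2 := mem_last_neq hl2 hcy.
by move/hasPn: hdis => /(_ c hc2); rewrite (d p1 hp1 hl1).
Qed.

Lemma dominates_antisym s c1 c2 :
  (forall v, connect (arcrel A) s v) ->
  dominates s c1 c2 -> c1 != c2 -> ~ dominates s c2 c1.
Proof.
move=> hr d12 hne d21; case/connectP: (hr c1) => p hp hl.
move: hl; case: (shortenP hp) => p' hp' hu _ /esym hl.
by have := dominated_notin_path d12 hne hp' hu hl; rewrite (d21 p' hp' hl).
Qed.

Definition entry_vertex (s : V) (W : {set V}) (r : V) : Prop :=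
  [/\ r \in W, s \in W -> r = s &
      forall a b, (a, b) \in A -> a \notin W -> b \in W -> b = r].

Lemma path_enters (W : {set V}) z p :
  z \notin W -> path (arcrel A) z p -> last z p \in W ->
  exists a b, [/\ (a, b) \in A, a \notin W, b \in W & b \in p].
Proof.
elim: p z => [|y p IH] z /=; first by move=> /negPf->.
move=> hz /andP[hzy hp] hl; case hyW: (y \in W).
  by exists z, y; rewrite mem_head hyW hz.
have [a [b [h1 h2 h3 h4]]] := IH y (negbT hyW) hp hl.
by exists a, b; rewrite inE h4 orbT.
Qed.

Lemma entry_vertex_dominates s W r y :
  entry_vertex s W r -> y \in W -> y != r -> dominates s r y.
Proof.
case=> hr hs hin hy hyr p hp hl; apply/negPn/negP => hn.
case hsW: (s \in W); first by move: hn; rewrite (hs hsW) mem_head.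
have hlW : last s p \in W by rewrite hl.
have [a [b [hab haW hbW hbp]]] := path_enters (negbT hsW) hp hlW.
by move: hn; rewrite -(hin _ _ hab haW hbW) inE hbp orbT.
Qed.

Section Diblock.
Variables (B X : V -> {set V}) (W : {set V}) (r : V).
Hypothesis hr : r \in W.
Hypothesis hB : forall v, v \in B r <-> in_diblock W A r v.
Hypothesis hX : forall x v, v \in X x <-> in_X W A r (B r) x v.

Lemma diblock_root : r \in B r.
Proof. by apply/hB; split=> //; left. Qed.

Lemma diblock_subset y : y \in B r -> y \in W.
Proof. by case/hB. Qed.

Lemma diblock_connect_setD1 x y :
  x != r -> y \in B r -> y != x -> connect (eW (W :\ x) A) r y.
Proof.
move=> hxr hy hyx; have hrx : r != x by rewrite eq_sym.
case: (eqVneq y r) => [->|hyr]; first exact: connect0.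
case/hB: hy => hyW [hyr'|[/and3P[_ _ ha]|[p [q [hp hq _ hdis]]]]].
- by move: hyr; rewrite hyr' eqxx.
- by apply: connect1; rewrite /eW !inE hr hrx hyx hyW ha.
case/and4P: hp => _ hpp /eqP hpl _.
case hxp: (x \in p); last by rewrite -hpl connect_eW_setD1 ?hxp.
(* x is internal to p, so the second path q avoids it *)
case/and4P: hq => _ hqp /eqP hql _.
move: hpl hpp hxp hdis; case/lastP: p => [//|p' l].
rewrite last_rcons => -> _; rewrite mem_rcons inE eq_sym (negPf hyx) /= => hxp'.
rewrite internal_rcons => /hasPn /(_ x hxp') hxq.
move: hql hqp hxq; case/lastP: q => [/= hq|q' l']; first by rewrite hq eqxx in hyr.
rewrite last_rcons => -> hqp; rewrite internal_rcons => hxq.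
have hx : x \notin rcons q' y by rewrite mem_rcons inE negb_or eq_sym hyx.
by have := connect_eW_setD1 hqp hrx hx; rewrite last_rcons.
Qed.

Lemma bottleneck_part_unreachable x v :
  v \in X x -> ~ connect (eW (W :\ x) A) r v.
Proof.
case/hX => hxB hxr hvW hvB hall hc.
have hrx : r \in W :\ x by rewrite !inE hr eq_sym hxr.
have [p [hp hsub]] := dpath_of_connect hrx hc.
have hpW : dpath W A r v p.
  case/and4P: hp => _ hpp hl hu.
  by rewrite /dpath hr (sub_path (eW_subrel (subsetDl W [set x])) hpp) hl hu.
have := mem_last_neq (hall p hpW) hxr; rewrite mem_filter => /andP[_ /hsub].
by rewrite !inE eqxx.
Qed.

Lemma connect_outside_bottleneck_part x a :
  x \in B r -> x != r -> a \in W -> a != x -> a \notin X x ->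
  connect (eW (W :\ x) A) r a.
Proof.
move=> hxB hxr haW hax haX.
case haB: (a \in B r); first exact: diblock_connect_setD1.
have : ~ (forall p, dpath W A r a p -> last r [seq y <- p | y \in B r] = x).
  by move=> h; move/negP: haX; apply; apply/hX; split; rewrite ?haB.
move=> hna; have [p hpl'] := not_all_ex_not _ _ hna.
have [hp hl] := imply_to_and _ _ hpl'.
case/and4P: hp => _ hpp /eqP hpl hpu.
case hxp: (x \in p); last by rewrite -hpl connect_eW_setD1 ?hxp // eq_sym.
(* the last vertex y of B_r after x on p is reachable avoiding x, and so is
   everything after y on p *)
move: hpp hpl hpu hl; case/splitPr: hxp => p1 p2.
rewrite cat_path last_cat /= => /andP[_ /andP[_ hp2]] hl2.
case/andP => _; rewrite cat_uniq => /and3P[_ _ /andP[hx2 _]].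
rewrite filter_cat /= hxB last_cat /=.
case hf: [seq y <- p2 | y \in B r] => [|y f]; first by move=> /(_ erefl).
move=> _; have : y \in [seq y <- p2 | y \in B r] by rewrite hf mem_head.
rewrite mem_filter => /andP[hyB hyp2].
have hyx : y != x by apply: contraNneq hx2 => <-.
apply: connect_trans (diblock_connect_setD1 hxr hyB hyx) _.
move: hp2 hl2 hx2; case/splitPr: hyp2 => p3 p4.
rewrite cat_path last_cat /= => /andP[_ /andP[_ hp4]] <-.
rewrite mem_cat inE !negb_or => /andP[_ /andP[_ hx4]].
exact: connect_eW_setD1 hp4 hyx hx4.
Qed.

Lemma entry_vertex_bottleneck s x :
  entry_vertex s W r -> x \in B r -> x != r -> entry_vertex s (x |: X x) x.
Proof.
case=> _ hs hin hxB hxr; split; first by rewrite setU11.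
  rewrite !inE => /orP[/eqP->//|/hX[_ _ hsW hsB _]].
  by move: hsB; rewrite -(hs hsW) diblock_root.
move=> a b hab; rewrite !inE negb_or => /andP[hax haX] /orP[/eqP//|hbX].
have [_ _ hbW hbB _] := (hX x b).1 hbX.
case haW: (a \in W); last first.
  by move: hbB; rewrite (hin _ _ hab (negbT haW) hbW) diblock_root.
case: (bottleneck_part_unreachable hbX).
apply: connect_trans (connect_outside_bottleneck_part hxB hxr haW hax haX) _.
have hbx : b != x by apply: contraNneq hbB => ->.
by apply: connect1; rewrite /eW !inE hax haW hbW hbx hab.
Qed.

End Diblock.

Fixpoint cutdec_parent_dominates (par : V -> V) (B : V -> {set V}) s
    (W : {set V}) r (N : {set V}) (H : cutdec A par B W r N) {struct H} :
  entry_vertex s W r ->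
  forall y, y \in N -> y != r -> dominates s (par y) y /\ par y != y.
Proof.
case: H => {}W {}r {}N X Nc hr hB hX hrec hN hentry y.
rewrite hN !inE => /orP[/eqP->|]; first by rewrite eqxx.
case/bigcupP => x /and3P[hxB hxr hX0] hy hyr.
case: (hrec x hxB hxr hX0) => hpx hcd.
case: (eqVneq y x) => [->|hyx].
  by rewrite hpx eq_sym hxr; split=> //; apply: entry_vertex_dominates hentry
    (diblock_subset hB hxB) hxr.
exact: (cutdec_parent_dominates par B s _ _ _ hcd
          (entry_vertex_bottleneck hr hB hX hentry hxB hxr) y hy hyx).
Qed.

Lemma child_path_dominates par B (N : {set V}) s x1 rest m n :
  cutdec A par B [set: V] s N -> path (child N par s) x1 rest ->
  (forall v, connect (arcrel A) s v) ->
  m < n -> n < size (x1 :: rest) ->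
  dominates s (nth s (x1 :: rest) m) (nth s (x1 :: rest) n) /\
  nth s (x1 :: rest) m != nth s (x1 :: rest) n.
Proof.
move=> hcd hp hr; pose x := nth s (x1 :: rest).
have hentry : entry_vertex s [set: V] s by split=> [|//|a b _]; rewrite ?inE.
have step l : l.+1 < size (x1 :: rest) ->
    dominates s (x l) (x l.+1) /\ x l != x l.+1.
  move=> hl; have /and3P[hyN hys /eqP hpar] := pathP s hp l hl.
  by rewrite /x -hpar; apply: cutdec_parent_dominates hcd hentry _ hyN hys.
elim: n => [//|n IH]; rewrite ltnS leq_eqVlt => /orP[/eqP <-|hmn] hn.
  exact: step.
have [d1 n1] := IH hmn (ltnW hn); have [d2 n2] := step n hn.
split; first exact: dominates_trans d1 d2.
by apply: contraPneq (dominates_antisym hr d1 n1) => ->.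
Qed.

End Digraph.

Section Branchings.
Variables (V : finType) (A : {set V * V}).

Lemma out_branching_subset (A' T : {set V * V}) s :
  A \subset A' -> out_branching A T s -> out_branching A' T s.
Proof. by move=> sA [h1 h2 h3 h4]; split=> //; apply: subset_trans sA. Qed.

Lemma in_branching_subset (A' T : {set V * V}) t :
  A \subset A' -> in_branching A T t -> in_branching A' T t.
Proof. by move=> sA [h1 h2 h3 h4]; split=> //; apply: subset_trans sA. Qed.

Lemma subset_setD1 (T : {set V * V}) a :
  T \subset A -> a \notin T -> T \subset A :\ a.
Proof.
move=> sTA haT; apply/subsetP => c hc; rewrite !inE (subsetP sTA _ hc) andbT.
by apply: contraNneq haT => <-.
Qed.

Lemma out_branching_setD1 T s a :
  out_branching A T s -> a \notin T -> out_branching (A :\ a) T s.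
Proof. by move=> [h1 h2 h3 h4] haT; split=> //; apply: subset_setD1. Qed.

Lemma in_branching_setD1 T t a :
  in_branching A T t -> a \notin T -> in_branching (A :\ a) T t.
Proof. by move=> [h1 h2 h3 h4] haT; split=> //; apply: subset_setD1. Qed.

Lemma out_branching_connect T s :
  out_branching A T s -> forall v, connect (arcrel A) s v.
Proof.
case=> hsub _ _ hc v; case/connectP: (hc v) => p hp ->.
apply: (path_connect (sub_path (fun x y => subsetP hsub (x, y)) hp)).
exact: mem_last.
Qed.

Lemma path_exchange_arc (T : {set V * V}) a b z p :
  path (arcrel T) z p -> a.2 \notin p -> path (arcrel (b |: (T :\ a))) z p.
Proof.
elim: p z => [|y p IH] z //= /andP[hzy hp]; rewrite inE negb_or => /andP[hy hn].
rewrite IH // andbT /arcrel !inE [_ \in T]hzy andbT orbC.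
by apply/orP; left; apply: contraNneq hy => <-.
Qed.

Section Exchange.
Variables (Tp : {set V * V}) (s xi xj u : V).
Hypothesis hTp : out_branching A Tp s.
Hypothesis hdom : dominates A s xi xj.
Hypothesis hne : xi != xj.
Hypothesis hbA : (xi, u) \in A.
Hypothesis haTp : (xj, u) \in Tp.

Let a := (xj, u).
Let b := (xi, u).
Let T' := b |: (Tp :\ a).

Lemma exchange_head_neq_root : u != s.
Proof.
case: hTp => _ /eqP; rewrite cards_eq0 => /eqP/setP/(_ a) h0 _ _.
by apply/eqP => hus; move: h0; rewrite !inE haTp /= hus eqxx.
Qed.

Lemma exchange_in_arc c : c \in Tp -> c.2 = u -> c = a.
Proof.
move=> hc hc2; have [_ _ hin1 _] := hTp.
have /eqP/cards1P[z hz] := hin1 u exchange_head_neq_root.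
have : c \in [set c in Tp | c.2 == u] by rewrite inE hc hc2 eqxx.
have : a \in [set c in Tp | c.2 == u] by rewrite inE haTp eqxx.
by rewrite hz !inE => /eqP-> /eqP.
Qed.

Lemma exchange_neq : b != a.
Proof. by apply: contraNneq hne => -[->]. Qed.

Lemma exchange_notin : b \notin Tp.
Proof. by apply: contraNN exchange_neq => /exchange_in_arc/(_ erefl)/eqP. Qed.

Lemma exchange_in_degree v :
  #|[set c in T' | c.2 == v]| = #|[set c in Tp | c.2 == v]|.
Proof.
case: (eqVneq v u) => [->|hvu].
  have -> : [set c in T' | c.2 == u] = b |: ([set c in Tp | c.2 == u] :\ a).
    apply/setP => c; rewrite !inE.
    by case: (eqVneq c b) => [->|_] /=; [rewrite eqxx | rewrite -andbA].
  by apply: cardsU1D1; rewrite !inE ?haTp ?eqxx // (negPf exchange_notin).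
apply: eq_card => c; rewrite !inE.
case: (eqVneq c b) => [->|_] /=.
  by rewrite (negPf exchange_notin) eq_sym (negPf hvu).
by case: (eqVneq c a) => [->|] //=; rewrite eq_sym (negPf hvu) andbF.
Qed.

Lemma exchange_path_to_head p :
  path (arcrel Tp) s p -> last s p = u -> xj \in s :: p.
Proof.
case/lastP: p => [/= _ hsu|q l].
  by move: exchange_head_neq_root; rewrite hsu eqxx.
rewrite last_rcons rcons_path => /andP[_ harc] hl; rewrite hl in harc.
case: (exchange_in_arc harc erefl) => <-.
by have := mem_last s q; rewrite !inE mem_rcons inE => /orP[->|->]; rewrite ?orbT.
Qed.

(* Through u, a simple Tp-path would meet xj before its dominator xi. *)
Lemma exchange_connect_tail : connect (arcrel T') s xi.
Proof.
have [hsub _ _ hconn] := hTp.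
case/connectP: (hconn xi) => p hp hl.
move: hl; case: (shortenP hp) => p' hp' hu _ hl.
have hup : u \notin p'.
  apply/negP => hup; have hup' : u \in s :: p' by rewrite inE hup orbT.
  have hpA := sub_path (fun x y => subsetP hsub (x, y)) hp'.
  have := dominated_notin_path hdom hne hpA hu (esym hl); apply/negP; rewrite negbK.
  move: hp'; case/splitPl: hup' => p1 p2 hl1; rewrite cat_path => /andP[hp1 _].
  by rewrite -cat_cons mem_cat exchange_path_to_head.
rewrite hl; apply: (path_connect (path_exchange_arc (a:=a) b hp' hup)).
exact: mem_last.
Qed.

Lemma exchange_connect v : connect (arcrel T') s v.
Proof.
have hcu : connect (arcrel T') s u.
  apply: connect_trans exchange_connect_tail (connect1 _).
  by rewrite /arcrel !inE eqxx.
have [_ _ _ hconn] := hTp.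
case/connectP: (hconn v) => p hp ->; case: (shortenP hp) => p' hp' hu _.
case hup: (u \in p'); last first.
  apply: (path_connect (path_exchange_arc (a:=a) b hp' (negbT hup))).
  exact: mem_last.
(* a simple path enters u at most once, so after u it never uses a *)
move: hp' hu; case/splitPr: hup => p1 p2; rewrite cat_path /= => /and3P[_ _ hp2].
case/andP => _; rewrite cat_uniq => /and3P[_ _ /andP[hu2 _]].
rewrite last_cat /=; apply: connect_trans hcu _.
by apply: (path_connect (path_exchange_arc (a:=a) b hp2 hu2)); apply: mem_last.
Qed.

Lemma exchange_out_branching : out_branching (A :\ a) T' s.
Proof.
have [hsub hin0 hin1 _] := hTp; split.
- apply/subsetP => c; rewrite !inE => /orP[/eqP->|/andP[hca hc]].
    by rewrite exchange_neq hbA.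
  by rewrite hca (subsetP hsub _ hc).
- by rewrite exchange_in_degree.
- by move=> v hv; rewrite exchange_in_degree hin1.
- exact: exchange_connect.
Qed.

Lemma exchange_card_setD (Tm : {set V * V}) :
  a \notin Tm -> b \notin Tm -> #|T' :\: Tm| = #|Tp :\: Tm|.
Proof.
move=> haTm hbTm.
have -> : T' :\: Tm = b |: ((Tp :\: Tm) :\ a).
  apply/setP => c; rewrite !inE.
  by case: (eqVneq c b) => [->|_] /=; [rewrite hbTm | rewrite andbCA].
apply: cardsU1D1; first by rewrite !inE haTm haTp.
by rewrite !inE negb_and exchange_notin orbT.
Qed.

End Exchange.
End Branchings.

Lemma in_Rt_notin (V : finType) (A T : {set V * V}) t a :
  in_Rt A t a -> in_branching A T t -> a \notin T.
Proof. by case=> _ hRt hT; apply/negP => haT; apply: hRt; exists T. Qed.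

Theorem lemma15 (V : finType) (A : {set V * V}) (s t : V) (k : nat)
    (N : {set V}) (par : V -> V) (B : V -> {set V})
    (x1 : V) (rest : seq V) (i j : nat) (u : V) :
  loopless A ->
  reduced A s t ->
  cutdec A par B [set: V] s N ->
  degenerate_path N par B s x1 rest ->
  (i < j)%N -> (j < size (x1 :: rest))%N ->
  in_Aplus A N par B s x1 rest (nth s (x1 :: rest) i, u) ->
  in_Rt A t (nth s (x1 :: rest) i, u) ->
  in_Aplus A N par B s x1 rest (nth s (x1 :: rest) j, u) ->
  in_Rt A t (nth s (x1 :: rest) j, u) ->
  (positive A s t k <-> positive (A :\ (nth s (x1 :: rest) j, u)) s t k).
Proof.
move=> _ [[T0 hT0] _ _] hcd [hpath _] hij hj [hbA _ _ _] hRi _ hRj.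
set xi := nth s (x1 :: rest) i; set xj := nth s (x1 :: rest) j.
have hreach := out_branching_connect hT0.
have [hdom hne] := child_path_dominates hcd hpath hreach hij hj.
split; last first.
  case=> Tp [Tm [hTp hTm hk]]; exists Tp, Tm.
  by split=> //; [apply: out_branching_subset hTp | apply: in_branching_subset hTm];
     apply: subsetDl.
case=> Tp [Tm [hTp hTm hk]].
have haTm := in_Rt_notin hRj hTm; have hbTm := in_Rt_notin hRi hTm.
have hTm' := in_branching_setD1 hTm haTm.
case haTp: ((xj, u) \in Tp); last first.
  by exists Tp, Tm; split=> //; apply: out_branching_setD1 hTp (negbT haTp).
exists ((xi, u) |: (Tp :\ (xj, u))), Tm; split=> //.
  exact: exchange_out_branching hTp hdom hne hbA haTp.
by rewrite (exchange_card_setD hTp hne haTp haTm hbTm).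
Qed.
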